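(* Let $n\le 3$ and let $\mu$ be a valuated matroid of rank $n$ on $[2n]$. Then $L_\mu$ is isotropic if and only if $\mu\in\mathrm{SpDr}(n,2n)$.
   Context: $[2n]=\{1,\dots,n,\bar1,\dots,\bar n\}$ with $\bar{\bar i}=i$; $Si:=S\cup\{i\}$. $\mathbb{T}=\mathbb{R}\cup\{\infty\}$. A valuated matroid of rank $k$ on $[2n]$ is $\mu\in(\mathbb{T}^{\binom{[2n]}{k}}\setminus\{\infty\})/\mathbb{R}(1,\dots,1)$ such that for all $S\in\binom{[2n]}{k-1}$, $T\in\binom{[2n]}{k+1}$, the minimum of $\mu_{T\setminus i}+\mu_{Si}$ over $i\in T\setminus S$ is attained at least twice or is $\infty$. $L_\mu=\{x\in\mathbb{T}^{2n}:\forall T\in\binom{[2n]}{k+1},\ \min_{i\in T}(\mu_{T\setminus i}+x_i)\text{ attained at least twice or }\infty\}$. Points $x,y$ are orthogonal if $\min_{i\in[2n]}(x_i+y_{\bar i})$ is attained at least twice; $L$ is isotropic if any two of its points are orthogonal. $\mathrm{SpDr}(k,2n)$ is the set of valuated matroids $\mu$ of rank $k$ on $[2n]$ such that for every $S\in\binom{[2n]}{k-2}$ the minimum of $\mu_{S\cup\{i,\bar i\}}$ over $i\in[n]$ with $\{i,\bar i\}\cap S=\emptyset$ is attained at least twice (or is $\infty$). *)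

From HB Require Import structures.
From mathcomp Require Import all_boot all_order all_algebra.
From mathcomp Require Import reals.
Unset Printing Implicit Defensive.
Import Order.TTheory GRing.Theory Num.Theory.
Local Open Scope ring_scope.

Section Trop.
Variable R : realType.

(* T = R ∪ {∞}, with None = ∞ *)
Definition trop := option R.

(* tropical product (ordinary addition, ∞ absorbing) *)
Definition tadd (a b : trop) : trop :=
  match a, b with Some x, Some y => Some (x + y) | _, _ => None end.

Definition tle (a b : trop) : bool :=
  match a, b with
  | _, None => true
  | None, Some _ => false
  | Some x, Some y => x <= y
  end.

Definition min_twice {A : finType} (I : {set A}) (f : A -> trop) : Prop :=
  (forall i, i \in I -> f i = None) \/
  exists i j, [/\ i \in I, j \in I, i != j, f i = f j &
                  forall l, l \in I -> tle (f i) (f l)].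

(* ground set [2n] = {1..n, 1bar..nbar}: (false,i) = i, (true,i) = ibar *)
Definition ground (n : nat) := (bool * 'I_n)%type.
Definition bar {n : nat} (e : ground n) : ground n := (~~ e.1, e.2).

(* a representative of a valuated matroid of rank k on [2n];
   only values on k-subsets are relevant *)
Definition valuated_matroid (n k : nat) (mu : {set ground n} -> trop) : Prop :=
  (exists B : {set ground n}, #|B| = k /\ mu B <> None) /\
  forall S T : {set ground n}, #|S|.+1 = k -> #|T| = k.+1 ->
    min_twice (T :\: S) (fun i => tadd (mu (T :\ i)) (mu (i |: S))).

Definition L_mu (n k : nat) (mu : {set ground n} -> trop) (x : ground n -> trop) : Prop :=
  forall T : {set ground n}, #|T| = k.+1 ->
    min_twice T (fun i => tadd (mu (T :\ i)) (x i)).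

Definition orthogonal (n : nat) (x y : ground n -> trop) : Prop :=
  min_twice [set: ground n] (fun i => tadd (x i) (y (bar i))).

Definition isotropic (n : nat) (L : (ground n -> trop) -> Prop) : Prop :=
  forall x y, L x -> L y -> orthogonal n x y.

Definition SpDr (n k : nat) (mu : {set ground n} -> trop) : Prop :=
  valuated_matroid n k mu /\
  forall S : {set ground n}, #|S| + 2 = k ->
    min_twice [set i : 'I_n | ((false, i) \notin S) && ((true, i) \notin S)]
              (fun i => mu (S :|: [set (false, i); (true, i)])).

End Trop.

(* For n <= 3 a set S of size n - 2 leaves exactly two free indices p and q, so the
   symplectic Dressian relation at S reads mu(S + p + p') = mu(S + q + q'), where
   p' is the bar of p.  Isotropy gives it: the valuated cocircuits j |-> mu(A + j),
   |A| = n - 1, lie in L_mu, and in the orthogonality relation of the cocircuits of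
   S + a and S + b (a over p, b over q) only two terms survive,
   mu(S + a + a') + mu(S + a + b) and mu(S + b + b') + mu(S + a + b).  If mu(S + a + b)
   is infinite for every choice of a and b, the orthogonality of the cocircuits of
   S + a and S + a' shows that both sides are infinite.
   Conversely, for n <= 3 these relations say mu(C) = mu(C^perp), C^perp = {j | j' \notin C};
   hence for y in L_mu the vector y o bar satisfies the relations of the dual tropical
   linear space, which is orthogonal to L_mu: if x + z had a unique minimum at I, a
   basis B containing I that is lexicographically optimal (most infinite coordinates
   of x, then least mu(B) - sum_B x) would make I the unique minimum of the dual
   relation at B - I. *)

From mathcomp Require Import all_boot all_order all_algebra.
From mathcomp Require Import reals.
From mathcomp Require Import zify lra.
Set Implicit Arguments.
Unset Strict Implicit.
Unset Printing Implicit Defensive.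
Import Order.TTheory GRing.Theory Num.Theory.
Local Open Scope ring_scope.

Section MinTwice.
Variables (R : realType) (A : finType).
Implicit Types (I J : {set A}) (f g : A -> trop R).

Lemma tle_refl (a : trop R) : tle R a a.
Proof. by case: a => //= r; rewrite lexx. Qed.

Lemma tle_None (a : trop R) : tle R a None.
Proof. by case: a. Qed.

Lemma tadd_None_r (a : trop R) : tadd R a None = None.
Proof. by case: a. Qed.

Lemma tadd_Some_r_inj (c : R) : injective (fun a => tadd R a (Some c)).
Proof. by case=> [a|] [b|] //= [/addIr ->]. Qed.

Lemma tle_anti (a b : trop R) : tle R a b -> tle R b a -> a = b.
Proof. by case: a => [a|]; case: b => [b|] //= ab ba; rewrite (@le_anti _ _ a b) ?ab ?ba. Qed.

Lemma taddC : commutative (tadd R).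
Proof. by case=> [a|] [b|] //=; rewrite addrC. Qed.

Lemma eq_min_twice I f g :
  {in I, f =1 g} -> min_twice R I f -> min_twice R I g.
Proof.
move=> fg [fN|[i [j [Ii Ij ij fij fmin]]]]; first by left=> i Ii; rewrite -fg ?fN.
right; exists i, j; split; rewrite -?fg //.
by move=> l Il; rewrite -!fg // fmin.
Qed.

Lemma min_twice_widen I J f :
  J \subset I -> {in I :\: J, forall i, f i = None} ->
  min_twice R J f -> min_twice R I f.
Proof.
move=> sJI fN [fJN|[i [j [Ji Jj ij fij fmin]]]].
  left=> i Ii; have [/fJN //|iJ] := boolP (i \in J).
  by rewrite fN // inE iJ.
right; exists i, j; split=> //; try exact: (subsetP sJI).
move=> l Il; have [/fmin //|lJ] := boolP (l \in J).
by rewrite (fN l) ?tle_None // inE lJ.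
Qed.

Lemma min_twice_other I f p :
  min_twice R I f -> p \in I -> f p != None ->
  exists2 q, q \in I & q != p /\ tle R (f q) (f p).
Proof.
move=> [fN|[i [j [Ii Ij ij fij fmin]]]] Ip; first by rewrite fN.
have [ip|] := eqVneq i p; last by exists i; rewrite ?fmin.
by exists j; rewrite -?ip 1?eq_sym // -fij fmin.
Qed.

Lemma min_twice_supp2 I f p q :
  p \in I -> q \in I -> {in I, forall j, j != p -> j != q -> f j = None} ->
  min_twice R I f -> f p = f q.
Proof.
move=> Ip Iq fN [allN|[i [j [Ii Ij ij fij fmin]]]]; first by rewrite !allN.
case fi: (f i) => [r|]; last first.
  by have := fmin p Ip; have := fmin q Iq; rewrite fi; do 2!case: (f _).
have inpq l : l \in I -> f l != None -> (l == p) || (l == q).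
  by move=> Il; apply: contraR; rewrite negb_or => /andP[lp lq]; rewrite fN.
have fiN : f i != None by rewrite fi.
have fjN : f j != None by rewrite -fij fi.
by case/orP: (inpq i Ii fiN) => /eqP ip; case/orP: (inpq j Ij fjN) => /eqP jp;
  move: ij fij; rewrite ip jp ?eqxx // => _ ->.
Qed.

Lemma min_twice_set2 f p q :
  p != q -> min_twice R [set p; q] f <-> f p = f q.
Proof.
move=> pq; split.
  by apply: min_twice_supp2; rewrite ?set21 ?set22 // => j /set2P[]->; rewrite eqxx.
move=> fpq; right; exists p, q; split; rewrite ?inE ?eqxx ?orbT //.
by move=> l /set2P[]->; rewrite ?fpq tle_refl.
Qed.

Lemma min_twice_imset (h : A -> A) I g :
  injective h -> min_twice R (h @: I) g -> min_twice R I (g \o h).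
Proof.
move=> h_inj [gN|[_ [_ [/imsetP[i Ii ->] /imsetP[j Ij ->] ij gij gmin]]]].
  by left=> i Ii; rewrite /= gN ?imset_f.
right; exists i, j; split=> //; first by rewrite (inj_eq h_inj) in ij.
by move=> l Il; rewrite /= gmin ?imset_f.
Qed.

Lemma min_twiceVstrict_min I f :
  min_twice R I f \/
  exists2 i, i \in I & f i != None /\ {in I, forall j, j != i -> ~~ tle R (f j) (f i)}.
Proof.
have [/existsP[i0 /andP[Ii0 fi0]]|allN] := boolP [exists i in I, f i != None]; last first.
  left; left=> i Ii; apply/eqP; apply: contraNT allN => fi.
  by apply/existsP; exists i; rewrite Ii.
pose P := [pred i | (i \in I) && (f i != None)].
have Pi0 : P i0 by rewrite /= Ii0.
have [i /andP[Ii fiN] imin] := arg_minP (fun i => odflt 0 (f i)) Pi0.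
have [|notie] := boolP [exists j in I, (j != i) && tle R (f j) (f i)]; last first.
  right; exists i => //; split=> // j Ij ji; apply: contraNN notie => fji.
  by apply/existsP; exists j; rewrite Ij ji.
case/existsP=> j /and3P[Ij ji].
case fi: (f i) fiN => [r|] // _; case fj: (f j) => [s|] //= sr.
have fmin l : l \in I -> tle R (Some r) (f l).
  move=> Il; case fl: (f l) => [t|] //=.
  by have := imin l; rewrite /= Il fl fi; apply.
have rs : r = s by apply/eqP; rewrite eq_le sr andbT; have := fmin j Ij; rewrite fj.
left; right; exists i, j; split; rewrite 1?eq_sym ?fi ?fj ?rs //.
by rewrite -rs.
Qed.
End MinTwice.

Section Ground.
Variable n : nat.
Implicit Types (S C D : {set ground n}) (a j : ground n) (i : 'I_n).

Lemma barK : involutive (@bar n).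
Proof. by case=> b i; rewrite /bar /= negbK. Qed.

Lemma bar_inj : injective (@bar n).
Proof. exact: inv_inj barK. Qed.

Lemma bar_eqF j : (bar j == j) = false.
Proof. by case: j => [[] i]; rewrite /bar xpair_eqE. Qed.

Lemma eq_snd_bar j a : j.2 = a.2 -> j = a \/ j = bar a.
Proof. by case: j a => [[] i] [[] i'] /= ->; auto. Qed.

Definition fiber i : {set ground n} := [set (false, i); (true, i)].

Lemma in_fiber i j : (j \in fiber i) = (j.2 == i).
Proof. by case: j => [[] i']; rewrite !inE !xpair_eqE /= ?orbF. Qed.

Lemma fiber_snd a : fiber a.2 = [set a; bar a].
Proof. by case: a => [[] i]; rewrite /fiber /bar // setUC. Qed.

Lemma setU1_fiber S a : bar a |: (a |: S) = S :|: fiber a.2.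
Proof. by rewrite fiber_snd setUCA setUA setUC. Qed.

Definition free S : {set 'I_n} := [set i | ((false, i) \notin S) && ((true, i) \notin S)].

Lemma in_free S j : (j.2 \in free S) = (j \notin S) && (bar j \notin S).
Proof. by case: j => [[] i]; rewrite inE // andbC. Qed.

Lemma free0 : free set0 = setT.
Proof. by apply/setP=> i; rewrite !inE. Qed.

Lemma free1 a : free [set a] = [set~ a.2].
Proof.
by apply/setP=> i; rewrite !inE; case: a => [[] i'] /=; rewrite ?andbT xpair_eqE.
Qed.

Lemma card_free S : (n <= 3)%N -> (#|S| + 2)%N = n -> #|free S| = 2%N.
Proof.
move=> n3 cS; have /orP[/eqP/cards0_eq S0|/cards1P[a S1]] : (#|S| == 0) || (#|S| == 1)%N.
  by case: #|S| cS => [|[|]]; lia.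
- by rewrite S0 free0 cardsT card_ord -cS S0 cards0.
- by rewrite S1 free1 cardsC1 card_ord -cS S1 cards1.
Qed.

Lemma card_ground : #|{: ground n}| = (2 * n)%N.
Proof. by rewrite card_prod card_bool card_ord. Qed.

Definition perp C : {set ground n} := [set j | bar j \notin C].

Lemma perp_imset S : perp S = bar @: ~: S.
Proof. by apply/setP=> j; rewrite (can2_imset_pre _ barK barK) !inE. Qed.

Lemma perp_setU1 S a : perp (a |: S) = perp S :\ bar a.
Proof. by apply/setP=> j; rewrite !inE negb_or -(inj_eq bar_inj) barK. Qed.

Lemma card_perp C : (#|C| + #|perp C|)%N = (2 * n)%N.
Proof. by rewrite perp_imset card_imset ?cardsC ?card_ground //; apply: bar_inj. Qed.

Lemma perp_eq C D : #|C| = n -> #|D| = n -> D \subset perp C -> D = perp C.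
Proof.
move=> cC cD sDC; apply/eqP; rewrite eqEcard sDC cD.
by have := card_perp C; rewrite cC; lia.
Qed.

Lemma perp_setU_fiber S p q :
  (#|S| + 2)%N = n -> {in S, forall j, bar j \notin S} ->
  p \in free S -> q \in free S -> p != q -> perp (S :|: fiber p) = S :|: fiber q.
Proof.
move=> cS S_pairfree pS qS pq.
have card_fiber i : i \in free S -> #|S :|: fiber i| = n.
  move=> iS; transitivity (#|S| + 2)%N => //.
  suff SFi : S :&: fiber i = set0 by rewrite cardsU SFi cards0 subn0 cards2 xpair_eqE.
  apply/setP=> j; rewrite in_setI in_set0 in_fiber; apply/andP=> -[jS /eqP ji].
  by move: iS; rewrite -ji in_free jS.
apply/esym/perp_eq; rewrite ?card_fiber //; apply/subsetP=> j.
rewrite in_setU in_fiber /perp in_set in_setU in_fiber negb_or /=.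
case/orP=> [jS|/eqP jq]; last first.
  by move: qS; rewrite -jq in_free => /andP[_ ->]; rewrite jq eq_sym.
by rewrite S_pairfree //=; apply: contraTneq pS => <-; rewrite in_free jS.
Qed.
End Ground.

Arguments barK {n}.
Arguments bar_inj {n}.

Section Cocircuits.
Variables (R : realType) (n k : nat) (mu : {set ground n} -> trop R).
Hypothesis mu_vm : valuated_matroid R n k mu.
Implicit Types (S A : {set ground n}) (a b j : ground n).

Definition cocircuit A j : trop R := if j \in A then None else mu (j |: A).

Lemma cocircuit_L_mu A : #|A|.+1 = k -> L_mu R n k mu (cocircuit A).
Proof.
move=> cA T cT; have [_ /(_ A T cA cT) mtT] := mu_vm.
apply: (min_twice_widen (subsetDl T A)).
  move=> i /setDP[iT]; rewrite inE iT andbT negbK => iA.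
  by rewrite /cocircuit iA tadd_None_r.
by apply: eq_min_twice mtT => i; rewrite inE => /andP[/negbTE iA _]; rewrite /cocircuit iA.
Qed.

Hypothesis mu_iso : isotropic R n (L_mu R n k mu).
Variable S : {set ground n}.
Hypothesis cardS : #|S|.+2 = k.

Lemma orthogonal_cocircuits a c :
  a \notin S -> c \notin S ->
  min_twice R setT (fun j => tadd R (cocircuit (a |: S) j) (cocircuit (c |: S) (bar j))).
Proof.
by move=> a_S c_S; apply: mu_iso; apply: cocircuit_L_mu; rewrite cardsU1 ?a_S ?c_S add1n.
Qed.

Section TwoFreeIndices.
Variables a b : ground n.
Hypotheses (ab : a.2 != b.2) (freeS : free S = [set a.2; b.2]).

Lemma free_two j : j \notin S -> bar j \notin S -> [\/ j = a, j = bar a, j = b | j = bar b].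
Proof.
move=> jS bjS; have : j.2 \in free S by rewrite in_free jS.
by rewrite freeS => /set2P[]/eq_snd_bar[] ->; [exact: Or41 | exact: Or42 | exact: Or43 | exact: Or44].
Qed.

Lemma notin_free : [/\ a \notin S, bar a \notin S, b \notin S & bar b \notin S].
Proof.
have : a.2 \in free S by rewrite freeS set21.
have : b.2 \in free S by rewrite freeS set22.
by rewrite !in_free => /andP[-> ->] /andP[-> ->].
Qed.

Lemma cocircuit_exchange :
  tadd R (mu (S :|: fiber a.2)) (mu (a |: (b |: S))) =
  tadd R (mu (S :|: fiber b.2)) (mu (a |: (b |: S))).
Proof.
have [aS baS bS bbS] := notin_free.
have a_b : (a == b) = false by apply: contraNF ab => /eqP->.
have b_a : (b == a) = false by rewrite eq_sym.
have : tadd R (cocircuit (a |: S) (bar a)) (cocircuit (b |: S) (bar (bar a))) =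
       tadd R (cocircuit (a |: S) b) (cocircuit (b |: S) (bar b)).
  apply: (min_twice_supp2 (in_setT _) (in_setT _) _ (orthogonal_cocircuits aS bS)).
  move=> j _ jba jb; rewrite /cocircuit !inE.
  have [//|jaS] := boolP (_ || _); have [|bjbS] := boolP (_ || _); first by rewrite tadd_None_r.
  move: jaS bjbS; rewrite !negb_or => /andP[ja jS] /andP[bjb bjS].
  by case: (free_two jS bjS) => e; move: ja jba jb bjb; rewrite e ?barK eqxx.
rewrite /cocircuit !inE barK !bar_eqF a_b b_a (negbTE aS) (negbTE baS) (negbTE bS) (negbTE bbS).
by rewrite -!setU1_fiber /= => ->; rewrite taddC [b |: (a |: S)]setUCA.
Qed.

Lemma cocircuit_fiber_None :
  mu (a |: (b |: S)) = None -> mu (a |: (bar b |: S)) = None -> mu (S :|: fiber a.2) = None.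
Proof.
move=> mab mabb; have [aS baS bS bbS] := notin_free.
have b_a : (b == a) = false by apply: contraNF ab => /eqP->.
have : tadd R (cocircuit (a |: S) (bar a)) (cocircuit (bar a |: S) (bar (bar a))) =
       tadd R (cocircuit (a |: S) b) (cocircuit (bar a |: S) (bar b)).
  apply: (min_twice_supp2 (in_setT _) (in_setT _) _ (orthogonal_cocircuits aS baS)).
  move=> j _ jba jb; rewrite /cocircuit !inE.
  have [//|jaS] := boolP (_ || _); have [|bjbaS] := boolP (_ || _); first by rewrite tadd_None_r.
  move: jaS bjbaS; rewrite !negb_or => /andP[ja jS] /andP[bjba bjS].
  case: (free_two jS bjS) => e; move: ja jba jb; rewrite e ?eqxx // => _ _ _.
  by rewrite setUCA mabb.
have a_ba : (a == bar a) = false by rewrite eq_sym bar_eqF.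
rewrite /cocircuit !inE barK a_ba b_a (negbTE aS) (negbTE bS) [b |: _]setUCA mab /=.
rewrite -setU1_fiber [a |: (bar a |: S)]setUCA bar_eqF (negbTE baS) /=.
by case: (mu _).
Qed.
End TwoFreeIndices.

Lemma isotropic_fiber_eq p q :
  p != q -> free S = [set p; q] -> mu (S :|: fiber p) = mu (S :|: fiber q).
Proof.
move=> pq freeS.
have exchange a b : a.2 = p -> b.2 = q -> mu (a |: (b |: S)) != None ->
    mu (S :|: fiber p) = mu (S :|: fiber q).
  move=> ap bq; case m: (mu _) => [c|] // _.
  apply: (@tadd_Some_r_inj _ c); rewrite /= -m -ap -bq.
  by apply: cocircuit_exchange; rewrite ap bq.
pose a : ground n := (false, p); pose b : ground n := (false, q).
have [mab|/exchange-> //] := eqVneq (mu (a |: (b |: S))) None.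
have [mabb|/exchange-> //] := eqVneq (mu (a |: (bar b |: S))) None.
have [mbab|/exchange-> //] := eqVneq (mu (bar a |: (b |: S))) None.
rewrite (cocircuit_fiber_None (a := a) (b := b)) // (cocircuit_fiber_None (a := b) (b := a)) //.
- by rewrite eq_sym.
- by rewrite setUC.
- by rewrite setUCA.
- by rewrite setUCA.
Qed.
End Cocircuits.

Lemma big_setD1U1 (T : Type) (idx : T) (op : Monoid.com_law idx) (A : finType)
    (B : {set A}) (i j : A) (F : A -> T) :
  i \in B -> j \notin B ->
  op (\big[op/idx]_(l in j |: (B :\ i)) F l) (F i) = op (\big[op/idx]_(l in B) F l) (F j).
Proof.
move=> iB jB; rewrite (big_setD1 i iB) big_setU1 /=; last by rewrite !inE negb_and jB orbT.
by rewrite Monoid.mulmAC [RHS]Monoid.mulmAC; congr (op _ _); rewrite Monoid.mulmC.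
Qed.

Lemma card_setD1U1 (A : finType) (B : {set A}) (i j : A) :
  i \in B -> j \notin B -> #|j |: (B :\ i)| = #|B|.
Proof. by move=> iB jB; rewrite cardsU1 (cardsD1 i B) iB !inE negb_and jB orbT. Qed.

Section Duality.
Variables (R : realType) (n k : nat) (mu : {set ground n} -> trop R).
Variable x : ground n -> trop R.
Hypothesis x_L : L_mu R n k mu x.
Implicit Types (B : {set ground n}) (i j : ground n).

Let is_basis B := (#|B| == k) && (mu B != None).
Let n_inf B := (\sum_(i in B) (x i == None))%N.
(* Infinite coordinates count as 0 in [x_sum]; potentials are only compared between
   bases with the same [n_inf], through exchanges of finite coordinates. *)
Let x_sum B := \sum_(i in B) odflt 0 (x i).
Let potential B := odflt 0 (mu B) - x_sum B.

Let optimal B := [/\ is_basis B,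
  forall B', is_basis B' -> (n_inf B' <= n_inf B)%N &
  forall B', is_basis B' -> n_inf B' = n_inf B -> potential B <= potential B'].

Lemma exists_optimal : (exists B, #|B| = k /\ mu B <> None) -> exists B, optimal B.
Proof.
case=> B0 [cB0 /eqP mB0]; have bB0 : is_basis B0 by rewrite /is_basis cB0 eqxx.
have [Bm bBm maxBm] := arg_maxnP n_inf bB0.
pose P := [pred B | is_basis B && (n_inf B == n_inf Bm)].
have PBm : P Bm by rewrite /= bBm eqxx.
have [B /andP[bB /eqP nB] minB] := arg_minP potential PBm.
exists B; split=> // [B' bB'|B' bB' nB']; first by rewrite nB; apply: maxBm.
by apply: minB; rewrite /= bB' nB' nB eqxx.
Qed.

Lemma n_inf_exchange B i j :
  i \in B -> j \notin B -> (n_inf (j |: (B :\ i)) + (x i == None) = n_inf B + (x j == None))%N.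
Proof. exact: big_setD1U1. Qed.

Lemma x_sum_exchange B i j :
  i \in B -> j \notin B -> x_sum (j |: (B :\ i)) + odflt 0 (x i) = x_sum B + odflt 0 (x j).
Proof. exact: big_setD1U1. Qed.

Section Exchange.
Variables (B : {set ground n}) (i j : ground n).
Hypotheses (B_opt : optimal B) (iB : i \in B) (jB : j \notin B).

Lemma exchange_basis a b :
  x i = Some a -> x j = Some b -> mu (j |: (B :\ i)) != None ->
  [/\ is_basis (j |: (B :\ i)), n_inf (j |: (B :\ i)) = n_inf B &
      potential (j |: (B :\ i)) - potential B =
      (odflt 0 (mu (j |: (B :\ i))) + a) - (odflt 0 (mu B) + b)].
Proof.
move=> xi xj mB'; case: B_opt => /andP[cB _] _ _.
split; first by rewrite /is_basis card_setD1U1 ?cB.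
  by have := n_inf_exchange iB jB; rewrite xi xj /= !addn0.
by have := x_sum_exchange iB jB; rewrite /potential xi xj /=; lra.
Qed.

Lemma optimal_exchange_inf : x i != None -> x j = None -> mu (j |: (B :\ i)) = None.
Proof.
move=> /negbTE xi xj; apply/eqP; apply: contraT => mB'; case: B_opt => /andP[cB _] maxB _.
have bB' : is_basis (j |: (B :\ i)) by rewrite /is_basis card_setD1U1 ?cB.
by have := n_inf_exchange iB jB; have := maxB _ bB'; rewrite xi xj eqxx /=; lia.
Qed.

Lemma optimal_exchange_le :
  x j != None -> tle R (tadd R (mu B) (x j)) (tadd R (mu (j |: (B :\ i))) (x i)).
Proof.
case xi: (x i) => [a|] xjN; last by rewrite tadd_None_r tle_None.
case xj: (x j) xjN => [b|] // _.
case mB': (mu (j |: (B :\ i))) => [c|]; last by rewrite tle_None.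
have [|bB' nB' dpot] := exchange_basis xi xj; first by rewrite mB'.
case: B_opt => /andP[_ mB] _ minB; case: (mu B) mB dpot => [m|] // _ /=.
by have := minB _ bB' nB'; rewrite mB' /= => le_pot dpot; lra.
Qed.

Lemma optimal_exchange_eq :
  x j != None -> tadd R (mu B) (x j) = tadd R (mu (j |: (B :\ i))) (x i) ->
  optimal (j |: (B :\ i)).
Proof.
case xj: (x j) => [b|] // _; case: B_opt => /andP[_ mB] maxB minB.
case mBe: (mu B) mB => [m|] // _; case mB': (mu (j |: (B :\ i))) => [c|] //.
case xi: (x i) => [a|] // [e].
have [|bB' nB' dpot] := exchange_basis xi xj; first by rewrite mB'.
split=> // [B'' bB''|B'' bB'' nB'']; first by rewrite nB'; apply: maxB.
have := minB _ bB'' (etrans nB'' nB'); rewrite mBe mB' /= e in dpot.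
by lra.
Qed.
End Exchange.

Lemma optimal_through B I :
  optimal B -> x I != None -> exists2 B', optimal B' & I \in B'.
Proof.
move=> B_opt xI; have [IB|IB] := boolP (I \in B); first by exists B.
have [/andP[/eqP cB mB] _ _] := B_opt.
have cT : #|I |: B| = k.+1 by rewrite cardsU1 IB cB.
have TI : (I |: B) :\ I = B by rewrite setU1K.
have TD l : l \in B -> (I |: B) :\ l = I |: (B :\ l).
  move=> lB; apply/setP=> e; rewrite !inE; have [->|//] := eqVneq e I.
  by rewrite /= andbT; apply: contraNneq IB => ->.
have gI : tadd R (mu ((I |: B) :\ I)) (x I) != None by rewrite TI; case: (mu B) mB; case: (x I) xI.
have [l] := min_twice_other (x_L cT) (setU11 I B) gI.
rewrite !inE TI => /orP[/eqP-> [/eqP //]|lB [_ gl]].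
exists (I |: (B :\ l)); last by rewrite setU11.
apply: optimal_exchange_eq => //; apply: tle_anti; first exact: optimal_exchange_le.
by rewrite -TD.
Qed.

Theorem L_mu_orthogonal (z : ground n -> trop R) :
  (exists B, #|B| = k /\ mu B <> None) ->
  (forall S : {set ground n}, #|S|.+1 = k ->
     min_twice R (~: S) (fun i => tadd R (mu (i |: S)) (z i))) ->
  min_twice R setT (fun i => tadd R (x i) (z i)).
Proof.
move=> has_basis z_dual.
have [//|[I _ [xzI Imin]]] := min_twiceVstrict_min setT (fun i => tadd R (x i) (z i)).
case xIe: (x I) xzI => [b|] //; case zIe: (z I) => [e|] // _.
have [B0 B0_opt] := exists_optimal has_basis.
have [|B B_opt IB] := optimal_through B0_opt (I := I); first by rewrite xIe.
have [/andP[/eqP cB]] := B_opt; case mBe: (mu B) => [m|] // _ _ _.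
have cS : #|B :\ I|.+1 = k by rewrite -cB (cardsD1 I B) IB.
have IS : I \in ~: (B :\ I) by rewrite !inE eqxx.
have [|j jS [jI]] := min_twice_other (z_dual _ cS) IS; first by rewrite setD1K // mBe zIe.
have jB : j \notin B by move: jS; rewrite !inE negb_and negbK (negbTE jI).
have := Imin j (in_setT j) jI; rewrite setD1K // mBe xIe zIe.
case xj: (x j) => [a|]; last by rewrite (optimal_exchange_inf B_opt IB jB) ?xIe.
have := optimal_exchange_le B_opt IB jB; rewrite xj mBe xIe => /(_ isT).
case: (mu (j |: _)) => [c|] //; case: (z j) => [d|] //=.
by rewrite -ltNge; lra.
Qed.
End Duality.

Section SmallRank.
Variables (R : realType) (n : nat) (mu : {set ground n} -> trop R).
Hypothesis n_le3 : (n <= 3)%N.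

Lemma isotropic_SpDr :
  valuated_matroid R n n mu -> isotropic R n (L_mu R n n mu) -> SpDr R n n mu.
Proof.
move=> mu_vm mu_iso; split=> // S cS.
have /eqP/cards2P[p [q [pq freeS]]] := card_free n_le3 cS.
rewrite -/(free S) freeS; apply/min_twice_set2 => //.
by apply: (isotropic_fiber_eq mu_vm mu_iso) => //; rewrite -addn2.
Qed.

Lemma SpDr_mu_perp_fiber (S : {set ground n}) (p : 'I_n) :
  SpDr R n n mu -> (#|S| + 2)%N = n -> p \in free S ->
  mu (S :|: fiber p) = mu (perp (S :|: fiber p)).
Proof.
move=> [_ mu_sp] cS pS.
have S_pairfree : {in S, forall j, bar j \notin S}.
  have S_le1 : (#|S| <= 1)%N by lia.
  by move=> j jS; apply/negP=> /(card_le1_eqP S_le1 _ _ jS)/eqP; rewrite bar_eqF.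
have [q [qp freeS]] : exists q, q != p /\ free S = [set p; q].
  have /eqP/cards2P[p' [q' [pq' freeS]]] := card_free n_le3 cS.
  move: pS; rewrite freeS => /set2P[] ->; first by exists q'; rewrite eq_sym.
  by exists p'; rewrite setUC.
have qS : q \in free S by rewrite freeS set22.
have := mu_sp S cS; rewrite -/(free S) freeS => /min_twice_set2 -> //; last by rewrite eq_sym.
by rewrite (perp_setU_fiber cS S_pairfree pS qS) // eq_sym.
Qed.

Lemma SpDr_mu_perp (C : {set ground n}) : SpDr R n n mu -> #|C| = n -> mu C = mu (perp C).
Proof.
move=> mu_sp cC.
have [/existsP[a /andP[aC baC]]|/existsPn C_pairfree] := boolP [exists a, (a \in C) && (bar a \in C)].
  pose S := C :\: fiber a.2.
  have FaC : fiber a.2 \subset C by rewrite fiber_snd; apply/subsetP=> j /set2P[]->.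
  have CSF : C = S :|: fiber a.2.
    apply/setP=> j; rewrite in_setU in_setD.
    by case: (boolP (j \in fiber a.2)) => [/(subsetP FaC)->|_]; rewrite ?orbT ?orbF.
  have cS : (#|S| + 2)%N = n.
    apply: etrans cC; have := subset_leq_card FaC.
    by rewrite (cardsDS FaC) fiber_snd cards2 eq_sym bar_eqF; lia.
  have aS : a.2 \in free S by rewrite in_free !in_setD !in_fiber eqxx.
  by rewrite CSF; apply: SpDr_mu_perp_fiber.
congr mu; apply: (perp_eq cC cC); apply/subsetP=> j jC; rewrite inE.
by have := C_pairfree j; rewrite jC.
Qed.
End SmallRank.

Theorem proposition4p12 (R : realType) (n : nat) (mu : {set ground n} -> trop R) :
  (n <= 3)%N -> valuated_matroid R n n mu ->
  (isotropic R n (L_mu R n n mu) <-> SpDr R n n mu).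
Proof.
move=> n_le3 mu_vm; split; first exact: isotropic_SpDr.
move=> mu_sp x y x_L y_L.
have [has_basis _] := mu_vm.
apply: (L_mu_orthogonal x_L (z := y \o bar) has_basis) => S cS.
(* mu (i |: S) = mu (perp S :\ bar i): the dual relation at S is that of y on perp S. *)
have cT : #|perp S| = n.+1 by have := card_perp S; lia.
have := y_L _ cT; rewrite {1}perp_imset => /(min_twice_imset bar_inj).
apply: eq_min_twice => i; rewrite inE => iS /=.
by rewrite [mu (i |: S)](SpDr_mu_perp n_le3 mu_sp) ?perp_setU1 // cardsU1 iS.
Qed.
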